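(* Let $\mathbf{X},\mathbf{Y},\mathbf{T}_1,\mathbf{T}_2$ be random variables on finite alphabets, with the joint law $p(\mathbf{X},\mathbf{Y})$ fixed and with the Markov structure described in the context. Fix Lagrange multipliers $\beta,\lambda,\gamma$ with $\beta>0$, $\lambda>0$, $\gamma\ge 0$. Consider the functional $$\mathcal{F}[p(\mathbf{T}_1|\mathbf{X}),p(\mathbf{T}_2|\mathbf{X})] = -I(\mathbf{Y};\mathbf{T}_1,\mathbf{T}_2)+\beta I(\mathbf{T}_1;\mathbf{X})+\lambda I(\mathbf{T}_2;\mathbf{X})+\gamma I(\mathbf{T}_1;\mathbf{T}_2),$$ to be minimized over the two conditional distributions $p(\mathbf{T}_1|\mathbf{X})$ and $p(\mathbf{T}_2|\mathbf{X})$, each ranging over conditional probability distributions. Then an optimal (minimizing) pair of conditional distributions, assumed to have all the probabilities below strictly positive, satisfies the following self-consistent equations for all $x,t_1,t_2$: $$p(t_1|x)=\frac{p(t_1)}{Z_1(x)}\exp\Big\{\frac{\gamma}{\beta}D_{KL}\big[p(\mathbf{T}_2|x)\,\|\,p(\mathbf{T}_2|t_1)\big]-\frac{1}{\beta}\sum_{t_2}p(t_2|x)\,D_{KL}\big[p(\mathbf{Y}|x)\,\|\,p(\mathbf{Y}|t_1,t_2)\big]\Big\},$$ $$p(t_2|x)=\frac{p(t_2)}{Z_2(x)}\exp\Big\{\frac{\gamma}{\lambda}D_{KL}\big[p(\mathbf{T}_1|x)\,\|\,p(\mathbf{T}_1|t_2)\big]-\frac{1}{\lambda}\sum_{t_1}p(t_1|x)\,D_{KL}\big[p(\mathbf{Y}|x)\,\|\,p(\mathbf{Y}|t_1,t_2)\big]\Big\},$$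 where $Z_1(x),Z_2(x)$ are normalizing constants making the right-hand sides probability distributions in $t_1$ (resp. $t_2$).
   Context: Standing assumptions: $\mathbf{T}_1$ and $\mathbf{T}_2$ are stochastic mappings of $\mathbf{X}$, given by conditional distributions $p(\mathbf{T}_1|\mathbf{X})$, $p(\mathbf{T}_2|\mathbf{X})$; the joint law factorizes as $p(x,y,t_1,t_2)=p(x)\,p(y|x)\,p(t_1|x)\,p(t_2|x)$ (so each of $\mathbf{T}_1$, $\mathbf{T}_2$, $\mathbf{Y}$ is conditionally independent of all the other variables given $\mathbf{X}$). All marginals and conditionals ($p(t_1)$, $p(t_2)$, $p(t_2|t_1)$, $p(t_1|t_2)$, $p(y|t_1,t_2)$) are those induced by this joint law. $D_{KL}$ denotes Kullback–Leibler divergence and $I(\cdot;\cdot)$ mutual information. The functional arises as the Lagrangian of the problem: maximize $I(\mathbf{Y};\mathbf{T}_1,\mathbf{T}_2)$ subject to $I(\mathbf{X};\mathbf{T}_1)\le r_1$, $I(\mathbf{X};\mathbf{T}_2)\le r_2$, $I(\mathbf{T}_1;\mathbf{T}_2)\le\epsilon$. *)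

From HB Require Import structures.
From mathcomp Require Import all_boot all_order all_algebra.
From mathcomp Require Import reals sequences exp.
Set Implicit Arguments. Unset Strict Implicit. Unset Printing Implicit Defensive.
Import Order.TTheory GRing.Theory Num.Theory.
Local Open Scope ring_scope.

Section IB.
Variable R : realType.

Definition plogq (a b : R) : R := if a == 0 then 0 else a * ln (a / b).

Definition KL (A : finType) (P Q : A -> R) : R := \sum_(a : A) plogq (P a) (Q a).

Definition MI (A B : finType) (pab : A -> B -> R) (pa : A -> R) (pb : B -> R) : R :=
  \sum_(a : A) \sum_(b : B) plogq (pab a b) (pa a * pb b).

Definition cond_dist (A B : finType) (q : A -> B -> R) : Prop :=
  (forall a b, 0 <= q a b) /\ (forall a, \sum_(b : B) q a b = 1).

Definition joint_dist (A B : finType) (p : A -> B -> R) : Prop :=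
  (forall a b, 0 <= p a b) /\ \sum_(a : A) \sum_(b : B) p a b = 1.

Variables (X Y T1 T2 : finType).
(* pXY : the fixed law p(x,y); q1 = p(t1|x); q2 = p(t2|x).
   Joint law p(x,y,t1,t2) = p(x,y) q1(x,t1) q2(x,t2). *)
Variable pXY : X -> Y -> R.

Definition pX (x : X) : R := \sum_(y : Y) pXY x y.
Definition pY (y : Y) : R := \sum_(x : X) pXY x y.
Definition pYgX (x : X) (y : Y) : R := pXY x y / pX x.

Section Kernels.
Variables (q1 : X -> T1 -> R) (q2 : X -> T2 -> R).

Definition pT1 (t1 : T1) : R := \sum_(x : X) pX x * q1 x t1.
Definition pT2 (t2 : T2) : R := \sum_(x : X) pX x * q2 x t2.
Definition pXT1 (x : X) (t1 : T1) : R := pX x * q1 x t1.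
Definition pXT2 (x : X) (t2 : T2) : R := pX x * q2 x t2.
Definition pT1T2 (t1 : T1) (t2 : T2) : R := \sum_(x : X) pX x * q1 x t1 * q2 x t2.
Definition pT12Y (t : T1 * T2) (y : Y) : R :=
  \sum_(x : X) pXY x y * q1 x t.1 * q2 x t.2.
Definition pT12 (t : T1 * T2) : R := pT1T2 t.1 t.2.

Definition pT2gT1 (t1 : T1) (t2 : T2) : R := pT1T2 t1 t2 / pT1 t1.
Definition pT1gT2 (t2 : T2) (t1 : T1) : R := pT1T2 t1 t2 / pT2 t2.
Definition pYgT12 (t1 : T1) (t2 : T2) (y : Y) : R := pT12Y (t1, t2) y / pT1T2 t1 t2.

Definition I_Y_T12 : R := MI pT12Y pT12 pY.
Definition I_T1_X : R := MI pXT1 pX pT1.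
Definition I_T2_X : R := MI pXT2 pX pT2.
Definition I_T1_T2 : R := MI pT1T2 pT1 pT2.

End Kernels.

Definition IB_functional (beta lambda gamma : R)
  (q1 : X -> T1 -> R) (q2 : X -> T2 -> R) : R :=
  - I_Y_T12 q1 q2 + beta * I_T1_X q1 + lambda * I_T2_X q2
  + gamma * I_T1_T2 q1 q2.

Definition expo1 (beta gamma : R) (q1 : X -> T1 -> R) (q2 : X -> T2 -> R)
  (x : X) (t1 : T1) : R :=
  gamma / beta * KL (q2 x) (pT2gT1 q1 q2 t1)
  - beta^-1 * \sum_(t2 : T2) q2 x t2 * KL (pYgX x) (pYgT12 q1 q2 t1 t2).

Definition expo2 (lambda gamma : R) (q1 : X -> T1 -> R) (q2 : X -> T2 -> R)
  (x : X) (t2 : T2) : R :=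
  gamma / lambda * KL (q1 x) (pT1gT2 q1 q2 t2)
  - lambda^-1 * \sum_(t1 : T1) q1 x t1 * KL (pYgX x) (pYgT12 q1 q2 t1 t2).

Definition Z1 beta gamma q1 q2 (x : X) : R :=
  \sum_(t1 : T1) pT1 q1 t1 * expR (expo1 beta gamma q1 q2 x t1).
Definition Z2 lambda gamma q1 q2 (x : X) : R :=
  \sum_(t2 : T2) pT2 q2 t2 * expR (expo2 lambda gamma q1 q2 x t2).

End IB.

From HB Require Import structures.
From mathcomp Require Import all_boot all_order all_algebra.
From mathcomp Require Import all_classical reals topology normedtype sequences derive realfun exp.
From mathcomp Require Import lra ring.
Import Order.TTheory GRing.Theory Num.Theory.
Import numFieldNormedType.Exports.
Local Open Scope ring_scope.
Set Implicit Arguments. Unset Strict Implicit. Unset Printing Implicit Defensive.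

(* At an optimum with all probabilities positive, the derivative of the
   functional must vanish along every line that keeps p(T1|X) a conditional
   distribution, in particular along the one moving mass from t' to t at a
   single x.  Each of I(T1;X), I(T1;T2) and I(Y;T1,T2) has exactly one marginal
   not depending on p(T1|X), and the first variation of such a mutual
   information is sum (dp_ab) ln (p_ab / (p_a p_b)).  Collecting terms, the
   derivative along that line is beta p(x) times the difference at t and t'
   of ln p(t1|x) - ln p(t1) - expo1(x,t1); so this quantity depends on x
   only, which is the first self-consistent equation with its normalization
   Z1(x).  The second one follows by exchanging the roles of (T1, beta) and
   (T2, lambda), under which the functional is invariant. *)

Section FirstVariation.
Variable R : realType.

Lemma psumr_gt0 (A : finType) (f : A -> R) (a : A) :
  (forall b, 0 <= f b) -> 0 < f a -> 0 < \sum_b f b.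
Proof.
move=> f_ge0 fa_gt0; rewrite (bigD1 a) //=; apply: (lt_le_trans fa_gt0).
by rewrite lerDl sumr_ge0.
Qed.

Lemma is_derive_sum_fin (A : finType) (h : A -> R -> R) (dh : A -> R) (t : R) :
  (forall a, is_derive t 1 (h a) (dh a)) ->
  is_derive t 1 (fun z => \sum_a h a z) (\sum_a dh a).
Proof.
move=> hd; rewrite /= unlock /=; elim: (index_enum A) => [|a s IH] /=.
  exact: is_derive_cst.
exact: is_deriveD.
Qed.

Lemma is_derive_line (f : R -> R) (c d t : R) :
  (forall z, f z = c + z * d) -> is_derive t 1 f d.
Proof.
move=> fE; rewrite (funext fE).
apply: is_derive_eq; rewrite /GRing.scale /=; ring.
Qed.

Lemma plogqE (a b : R) : plogq a b = a * ln (a / b).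
Proof. by rewrite /plogq; case: eqP => [->|//]; rewrite mul0r. Qed.

Definition plogq_slope (a a' b b' : R) : R := a' * ln (a / b) + a' - a * b' / b.

Lemma is_derive_plogq (f g : R -> R) (df dg t : R) :
  is_derive t 1 f df -> is_derive t 1 g dg -> 0 < f t -> 0 < g t ->
  is_derive t 1 (fun z => plogq (f z) (g z)) (plogq_slope (f t) df (g t) dg).
Proof.
move=> fd gd ft_gt0 gt_gt0.
have hquot := is_deriveM fd (is_deriveV (lt0r_neq0 gt_gt0) gd).
have hln := @is_derive1_comp _ (@ln R) _ t _ _ (is_derive1_ln (divr_gt0 ft_gt0 gt_gt0)) hquot.
rewrite (_ : (fun z => _) = f * (@ln R \o (f * (fun z => (g z)^-1)))); last first.
  by apply/funext => z; rewrite plogqE.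
apply: (is_derive_eq (is_deriveM fd hln)).
rewrite /plogq_slope /= /GRing.scale /=; field.
by rewrite !gt_eqF.
Qed.

Lemma is_derive_plogq_line (a a' b b' t : R) : 0 < a + t * a' -> 0 < b + t * b' ->
  is_derive t 1 (fun z => plogq (a + z * a') (b + z * b'))
    (plogq_slope (a + t * a') a' (b + t * b') b').
Proof.
by move=> ??; apply: is_derive_plogq => //; apply: is_derive_line.
Qed.

End FirstVariation.

Section MutualInformation.
Variables (R : realType) (A B : finType).

Lemma sum_pair (F : A * B -> R) : \sum_w F w = \sum_a \sum_b F (a, b).
Proof. by rewrite pair_bigA; apply: eq_bigr => -[]. Qed.

Lemma MI_tr (pab : A -> B -> R) (pa : A -> R) (pb : B -> R) :
  MI pab pa pb = MI (fun b a => pab a b) pb pa.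
Proof.
rewrite /MI exchange_big; apply: eq_bigr => b _; apply: eq_bigr => a _.
by rewrite mulrC.
Qed.

Definition MI_slope (pab dab : A -> B -> R) (pa da : A -> R) (pb : B -> R) : R :=
  \sum_a \sum_b plogq_slope (pab a b) (dab a b) (pa a * pb b) (da a * pb b).

Lemma is_derive_MI_line (pab dab : A -> B -> R) (pa da : A -> R) (pb : B -> R) (t : R) :
  (forall a b, 0 < pab a b + t * dab a b /\ 0 < (pa a + t * da a) * pb b \/
               pab a b = 0 /\ dab a b = 0) ->
  is_derive t 1
    (fun z => MI (fun a b => pab a b + z * dab a b) (fun a => pa a + z * da a) pb)
    (MI_slope (fun a b => pab a b + t * dab a b) dab (fun a => pa a + t * da a) da pb).
Proof.
move=> pos; apply: is_derive_sum_fin => a; apply: is_derive_sum_fin => b.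
have lineE z : (pa a + z * da a) * pb b = pa a * pb b + z * (da a * pb b).
  by rewrite mulrDl mulrA.
case: (pos a b) => [[ab_gt0 b_gt0]|[-> ->]].
  under eq_fun do rewrite lineE; rewrite lineE.
  by apply: is_derive_plogq_line; rewrite -?lineE.
rewrite /plogq_slope !(mulr0, mul0r, add0r) oppr0.
under eq_fun do rewrite mulr0 add0r plogqE mul0r.
exact: is_derive_cst.
Qed.

Lemma MI_slope_marginal (pab dab : A -> B -> R) (pa da : A -> R) (pb : B -> R) :
  (forall a, \sum_b pab a b = pa a) -> (forall a, \sum_b dab a b = da a) ->
  (forall a, 0 < pa a) -> (forall a b, pb b = 0 -> pab a b = 0) ->
  MI_slope pab dab pa da pb = \sum_a \sum_b dab a b * ln (pab a b / (pa a * pb b)).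
Proof.
move=> pab_marg dab_marg pa_gt0 pab0.
have cancel_b a b : pab a b * (da a * pb b) / (pa a * pb b) = pab a b * da a / pa a.
  have [pb0|pb_neq0] := eqVneq (pb b) 0; first by rewrite pab0 // !mul0r.
  by field; rewrite pb_neq0 gt_eqF.
rewrite /MI_slope; apply: eq_bigr => a _.
have -> : \sum_b plogq_slope (pab a b) (dab a b) (pa a * pb b) (da a * pb b) =
    \sum_b dab a b * ln (pab a b / (pa a * pb b)) +
    (\sum_b dab a b - (\sum_b pab a b) * da a / pa a).
  rewrite !mulr_suml -sumrB -big_split; apply: eq_bigr => b _.
  by rewrite /plogq_slope cancel_b /= addrA.
by rewrite dab_marg pab_marg mulrAC mulfV ?lt0r_neq0 // mul1r subrr addr0.
Qed.
End MutualInformation.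

Section Kernels.
Variables (R : realType) (X Y T1 T2 : finType) (pXY : X -> Y -> R).

Definition kernel_line (T : finType) (q v : X -> T -> R) (z : R) : X -> T -> R :=
  fun x s => q x s + z * v x s.

Variables (q1 v : X -> T1 -> R) (q2 : X -> T2 -> R).

Lemma pT1_line z s : pT1 pXY (kernel_line q1 v z) s = pT1 pXY q1 s + z * pT1 pXY v s.
Proof.
by rewrite /pT1 mulr_sumr -big_split; apply: eq_bigr => x _ /=; rewrite /kernel_line; ring.
Qed.

Lemma pT1T2_line z s u :
  pT1T2 pXY (kernel_line q1 v z) q2 s u = pT1T2 pXY q1 q2 s u + z * pT1T2 pXY v q2 s u.
Proof.
by rewrite /pT1T2 mulr_sumr -big_split; apply: eq_bigr => x _ /=; rewrite /kernel_line; ring.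
Qed.

Lemma pT12Y_line z w y :
  pT12Y pXY (kernel_line q1 v z) q2 w y = pT12Y pXY q1 q2 w y + z * pT12Y pXY v q2 w y.
Proof.
by rewrite /pT12Y mulr_sumr -big_split; apply: eq_bigr => x _ /=; rewrite /kernel_line; ring.
Qed.

Lemma pXT1_line z x s :
  pXT1 pXY (kernel_line q1 v z) x s = pXT1 pXY q1 x s + z * pXT1 pXY v x s.
Proof. by rewrite /pXT1 /kernel_line; ring. Qed.

Lemma pT12Y_sumY w : \sum_y pT12Y pXY q1 q2 w y = pT12 pXY q1 q2 w.
Proof. by rewrite exchange_big; apply: eq_bigr => x _; rewrite -!mulr_suml. Qed.

Lemma pT1T2_sumT2 s : (forall x, \sum_u q2 x u = 1) -> \sum_u pT1T2 pXY q1 q2 s u = pT1 pXY q1 s.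
Proof.
move=> q2_sum; rewrite exchange_big; apply: eq_bigr => x _.
by rewrite -mulr_sumr q2_sum mulr1.
Qed.

Lemma sum_pXT1_mul (l : T1 -> X -> R) :
  \sum_s \sum_x pXT1 pXY v x s * l s x = \sum_x \sum_s v x s * (pX pXY x * l s x).
Proof.
rewrite exchange_big; apply: eq_bigr => x _; apply: eq_bigr => s _.
by rewrite /pXT1; ring.
Qed.

Lemma sum_pT1T2_mul (l : T1 -> T2 -> R) :
  \sum_s \sum_u pT1T2 pXY v q2 s u * l s u =
  \sum_x \sum_s v x s * (pX pXY x * \sum_u q2 x u * l s u).
Proof.
rewrite /pT1T2; under eq_bigr do under eq_bigr do rewrite mulr_suml.
under eq_bigr do rewrite exchange_big.
rewrite exchange_big; apply: eq_bigr => x _; apply: eq_bigr => s _.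
rewrite !mulr_sumr; apply: eq_bigr => u _; ring.
Qed.

Lemma sum_pT12Y_mul (l : T1 * T2 -> Y -> R) :
  \sum_w \sum_y pT12Y pXY v q2 w y * l w y =
  \sum_x \sum_s v x s * \sum_u \sum_y pXY x y * q2 x u * l (s, u) y.
Proof.
rewrite sum_pair /pT12Y /=.
under eq_bigr do under eq_bigr do under eq_bigr do rewrite mulr_suml.
under eq_bigr do under eq_bigr do rewrite exchange_big.
under eq_bigr do rewrite exchange_big.
rewrite exchange_big; apply: eq_bigr => x _; apply: eq_bigr => s _.
rewrite mulr_sumr; apply: eq_bigr => u _.
rewrite mulr_sumr; apply: eq_bigr => y _; ring.
Qed.

End Kernels.

Section Positivity.
Variables (R : realType) (X Y T1 T2 : finType) (pXY : X -> Y -> R).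
Hypothesis pXY_ge0 : forall x y, 0 <= pXY x y.
Hypothesis pX_gt0 : forall x, 0 < pX pXY x.
Variable x0 : X.
Variables (r1 : X -> T1 -> R) (r2 : X -> T2 -> R).
Hypothesis r1_gt0 : forall x s, 0 < r1 x s.
Hypothesis r2_gt0 : forall x u, 0 < r2 x u.

Lemma pT1_gt0 s : 0 < pT1 pXY r1 s.
Proof. by apply: (psumr_gt0 (a := x0)) => [x|]; rewrite ?mulr_ge0 ?mulr_gt0 ?ltW. Qed.

Lemma pT1T2_gt0 s u : 0 < pT1T2 pXY r1 r2 s u.
Proof. by apply: (psumr_gt0 (a := x0)) => [x|]; rewrite ?mulr_ge0 ?mulr_gt0 ?ltW. Qed.

Lemma pT12Y_gt0 w y : pY pXY y != 0 -> 0 < pT12Y pXY r1 r2 w y.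
Proof.
move=> /eqP /(psumr_neq0P (fun x _ => pXY_ge0 x y)) [x /andP[_ pxy_gt0]].
by apply: (psumr_gt0 (a := x)) => [x'|]; rewrite ?mulr_ge0 ?mulr_gt0 ?pXY_ge0 ?ltW.
Qed.

End Positivity.

Lemma pT12Y_eq0 (R : realType) (X Y T1 T2 : finType) (pXY : X -> Y -> R)
    (r1 : X -> T1 -> R) (r2 : X -> T2 -> R) w y :
  (forall x, 0 <= pXY x y) -> pY pXY y = 0 -> pT12Y pXY r1 r2 w y = 0.
Proof.
move=> pXY_ge0 /psumr_eq0P pY0; apply: big1 => x _.
by rewrite pY0 ?mul0r.
Qed.

Section IBVariation.
Variables (R : realType) (X Y T1 T2 : finType) (pXY : X -> Y -> R).
Variables (beta lambda gamma : R) (q2 : X -> T2 -> R).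
Hypothesis pXY_ge0 : forall x y, 0 <= pXY x y.
Hypothesis pX_gt0 : forall x, 0 < pX pXY x.
Hypothesis q2_gt0 : forall x u, 0 < q2 x u.
Variable x0 : X.

Definition IB_slope (q1 v : X -> T1 -> R) : R :=
  - MI_slope (pT12Y pXY q1 q2) (pT12Y pXY v q2) (pT12 pXY q1 q2) (pT12 pXY v q2) (pY pXY)
  + beta * MI_slope (fun s x => pXT1 pXY q1 x s) (fun s x => pXT1 pXY v x s)
                    (pT1 pXY q1) (pT1 pXY v) (pX pXY)
  + gamma * MI_slope (pT1T2 pXY q1 q2) (pT1T2 pXY v q2) (pT1 pXY q1) (pT1 pXY v) (pT2 pXY q2).

Variables (q1 v : X -> T1 -> R) (t : R).
Hypothesis line_gt0 : forall x s, 0 < kernel_line q1 v t x s.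

Lemma is_derive_I_Y_T12_line :
  is_derive t 1 (fun z => I_Y_T12 pXY (kernel_line q1 v z) q2)
    (MI_slope (pT12Y pXY (kernel_line q1 v t) q2) (pT12Y pXY v q2)
              (pT12 pXY (kernel_line q1 v t) q2) (pT12 pXY v q2) (pY pXY)).
Proof.
have pT12Y_kl z : pT12Y pXY (kernel_line q1 v z) q2 =
    (fun w y => pT12Y pXY q1 q2 w y + z * pT12Y pXY v q2 w y).
  by apply/funext => w; apply/funext => y; rewrite pT12Y_line.
have pT12_kl z : pT12 pXY (kernel_line q1 v z) q2 =
    (fun w => pT12 pXY q1 q2 w + z * pT12 pXY v q2 w).
  by apply/funext => w; rewrite /pT12 pT1T2_line.
rewrite /I_Y_T12; under eq_fun do rewrite pT12Y_kl pT12_kl.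
rewrite pT12Y_kl pT12_kl; apply: is_derive_MI_line => w y.
rewrite -pT12Y_line /pT12 -pT1T2_line.
have [pY0|pY_neq0] := eqVneq (pY pXY y) 0.
  by right; split; apply: pT12Y_eq0.
left; split; first exact: pT12Y_gt0.
have pY_ge0 : 0 <= pY pXY y by apply: sumr_ge0 => x _.
by rewrite mulr_gt0 ?(pT1T2_gt0 pX_gt0) // lt_def pY_neq0 pY_ge0.
Qed.

Lemma is_derive_I_T1_X_line :
  is_derive t 1 (fun z => I_T1_X pXY (kernel_line q1 v z))
    (MI_slope (fun s x => pXT1 pXY (kernel_line q1 v t) x s) (fun s x => pXT1 pXY v x s)
              (pT1 pXY (kernel_line q1 v t)) (pT1 pXY v) (pX pXY)).
Proof.
have pXT1_kl z : (fun s x => pXT1 pXY (kernel_line q1 v z) x s) =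
    (fun s x => pXT1 pXY q1 x s + z * pXT1 pXY v x s).
  by apply/funext => s; apply/funext => x; rewrite pXT1_line.
have pT1_kl z : pT1 pXY (kernel_line q1 v z) = (fun s => pT1 pXY q1 s + z * pT1 pXY v s).
  by apply/funext => s; rewrite pT1_line.
rewrite (_ : (fun z => _) = fun z => MI (fun s x => pXT1 pXY (kernel_line q1 v z) x s)
                                          (pT1 pXY (kernel_line q1 v z)) (pX pXY)); last first.
  by apply/funext => z; rewrite /I_T1_X MI_tr.
under eq_fun do rewrite pXT1_kl pT1_kl.
rewrite pXT1_kl pT1_kl; apply: is_derive_MI_line => s x; left.
by rewrite -pXT1_line -pT1_line !mulr_gt0 ?(pT1_gt0 pX_gt0).
Qed.

Lemma is_derive_I_T1_T2_line :
  is_derive t 1 (fun z => I_T1_T2 pXY (kernel_line q1 v z) q2)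
    (MI_slope (pT1T2 pXY (kernel_line q1 v t) q2) (pT1T2 pXY v q2)
              (pT1 pXY (kernel_line q1 v t)) (pT1 pXY v) (pT2 pXY q2)).
Proof.
have pT1T2_kl z : pT1T2 pXY (kernel_line q1 v z) q2 =
    (fun s u => pT1T2 pXY q1 q2 s u + z * pT1T2 pXY v q2 s u).
  by apply/funext => s; apply/funext => u; rewrite pT1T2_line.
have pT1_kl z : pT1 pXY (kernel_line q1 v z) = (fun s => pT1 pXY q1 s + z * pT1 pXY v s).
  by apply/funext => s; rewrite pT1_line.
have pT2_gt0 u : 0 < pT2 pXY q2 u := pT1_gt0 pX_gt0 x0 q2_gt0 u.
rewrite /I_T1_T2; under eq_fun do rewrite pT1T2_kl pT1_kl.
rewrite pT1T2_kl pT1_kl; apply: is_derive_MI_line => s u; left.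
by rewrite -pT1T2_line -pT1_line !mulr_gt0 ?(pT1_gt0 pX_gt0) ?(pT1T2_gt0 pX_gt0).
Qed.

Lemma is_derive_IB_line :
  is_derive t 1 (fun z => IB_functional pXY beta lambda gamma (kernel_line q1 v z) q2)
    (IB_slope (kernel_line q1 v t) v).
Proof.
apply: (is_derive_eq (is_deriveD (is_deriveD (is_deriveD (is_deriveN is_derive_I_Y_T12_line)
  (is_deriveM (is_derive_cst beta t 1) is_derive_I_T1_X_line))
  (is_derive_cst (lambda * I_T2_X pXY q2) t 1))
  (is_deriveM (is_derive_cst gamma t 1) is_derive_I_T1_T2_line))).
by rewrite /IB_slope /GRing.scale /= !mulr0 !addr0.
Qed.

End IBVariation.

Section Gradient.
Variables (R : realType) (X Y T1 T2 : finType) (pXY : X -> Y -> R).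
Variables (beta gamma : R) (q1 : X -> T1 -> R) (q2 : X -> T2 -> R).
Hypothesis pXY_ge0 : forall x y, 0 <= pXY x y.
Hypothesis pX_gt0 : forall x, 0 < pX pXY x.
Hypothesis q1_gt0 : forall x s, 0 < q1 x s.
Hypothesis q2_gt0 : forall x u, 0 < q2 x u.
Hypothesis q2_sum : forall x, \sum_u q2 x u = 1.
Variable x0 : X.

Definition dI_Y_T12 (x : X) (s : T1) : R := \sum_u \sum_y pXY x y * q2 x u *
  ln (pT12Y pXY q1 q2 (s, u) y / (pT12 pXY q1 q2 (s, u) * pY pXY y)).
Definition dI_T1_X (x : X) (s : T1) : R :=
  pX pXY x * ln (pXT1 pXY q1 x s / (pT1 pXY q1 s * pX pXY x)).
Definition dI_T1_T2 (x : X) (s : T1) : R := pX pXY x * \sum_u q2 x u *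
  ln (pT1T2 pXY q1 q2 s u / (pT1 pXY q1 s * pT2 pXY q2 u)).
Definition IB_grad (x : X) (s : T1) : R :=
  - dI_Y_T12 x s + beta * dI_T1_X x s + gamma * dI_T1_T2 x s.

Lemma IB_slopeE (v : X -> T1 -> R) :
  IB_slope pXY beta gamma q2 q1 v = \sum_x \sum_s v x s * IB_grad x s.
Proof.
have pT1_pos s := pT1_gt0 pX_gt0 x0 q1_gt0 s.
have pT2_pos u : 0 < pT2 pXY q2 u := pT1_gt0 pX_gt0 x0 q2_gt0 u.
rewrite /IB_slope !MI_slope_marginal //; last 8 first.
- by move=> s; rewrite pT1T2_sumT2.
- by move=> s; rewrite pT1T2_sumT2.
- by move=> s u /eqP; rewrite (gt_eqF (pT2_pos u)).
- by move=> s x /eqP; rewrite (gt_eqF (pX_gt0 x)).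
- by move=> w; rewrite pT12Y_sumY.
- by move=> w; rewrite pT12Y_sumY.
- by move=> w; apply: (pT1T2_gt0 pX_gt0).
- by move=> w y; apply: pT12Y_eq0.
rewrite sum_pT12Y_mul sum_pXT1_mul sum_pT1T2_mul !mulr_sumr -sumrN -!big_split.
apply: eq_bigr => x _; rewrite !mulr_sumr -sumrN -!big_split; apply: eq_bigr => s _ /=.
by rewrite /IB_grad /dI_Y_T12 /dI_T1_X /dI_T1_T2; ring.
Qed.

Definition log_gibbs_ratio (x : X) (s : T1) : R :=
  ln (q1 x s) - ln (pT1 pXY q1 s) - expo1 pXY beta gamma q1 q2 x s.

Lemma dI_T1_XE x s : dI_T1_X x s = pX pXY x * (ln (q1 x s) - ln (pT1 pXY q1 s)).
Proof.
have pT1_pos := pT1_gt0 pX_gt0 x0 q1_gt0 s.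
rewrite /dI_T1_X /pXT1 -ln_div ?posrE //; congr (_ * ln _).
by field; rewrite !gt_eqF.
Qed.

Lemma dI_T1_T2E x s : dI_T1_T2 x s =
  - pX pXY x * KL (q2 x) (pT2gT1 pXY q1 q2 s)
  + pX pXY x * \sum_u q2 x u * (ln (q2 x u) - ln (pT2 pXY q2 u)).
Proof.
rewrite /dI_T1_T2 /KL mulNr -mulrN -mulrDr -sumrN -big_split /=; congr (_ * _).
apply: eq_bigr => u _; rewrite plogqE /pT2gT1.
have pT1T2_pos := pT1T2_gt0 pX_gt0 x0 q1_gt0 q2_gt0 s u.
have pT1_pos := pT1_gt0 pX_gt0 x0 q1_gt0 s.
have pT2_pos : 0 < pT2 pXY q2 u := pT1_gt0 pX_gt0 x0 q2_gt0 u.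
have q2_pos := q2_gt0 x u.
rewrite !ln_div ?lnM ?posrE ?mulr_gt0 ?divr_gt0 ?invr_gt0 //; ring.
Qed.

Lemma dI_Y_T12E x s : dI_Y_T12 x s =
  - pX pXY x * \sum_u q2 x u * KL (pYgX pXY x) (pYgT12 pXY q1 q2 s u)
  + \sum_u \sum_y pXY x y * q2 x u * (ln (pXY x y / pX pXY x) - ln (pY pXY y)).
Proof.
rewrite /dI_Y_T12 mulNr mulr_sumr -sumrN -big_split /=; apply: eq_bigr => u _.
rewrite /KL !mulr_sumr -sumrN -big_split /=; apply: eq_bigr => y _.
rewrite plogqE /pYgX /pYgT12 /pT12 /=.
have [->|pxy_neq0] := eqVneq (pXY x y) 0; first by rewrite !(mul0r, mulr0) oppr0 addr0.
have pxy_gt0 : 0 < pXY x y by rewrite lt_def pxy_neq0 pXY_ge0.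
have pT1T2_pos := pT1T2_gt0 pX_gt0 x0 q1_gt0 q2_gt0 s u.
have pY_pos : 0 < pY pXY y by apply: (psumr_gt0 (a := x)) => // x'; apply: pXY_ge0.
have pT12Y_pos := pT12Y_gt0 pXY_ge0 q1_gt0 q2_gt0 (s, u) (lt0r_neq0 pY_pos).
have q2_pos := q2_gt0 x u; have pX_pos := pX_gt0 x.
rewrite !ln_div ?lnM ?posrE ?mulr_gt0 ?divr_gt0 ?invr_gt0 //=.
by field; rewrite gt_eqF.
Qed.

Lemma IB_grad_sub x s s' : 0 < beta ->
  IB_grad x s - IB_grad x s' =
  beta * pX pXY x * (log_gibbs_ratio x s - log_gibbs_ratio x s').
Proof.
move=> beta_gt0; rewrite /IB_grad !dI_T1_XE !dI_T1_T2E !dI_Y_T12E.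
by rewrite /log_gibbs_ratio /expo1; field; rewrite gt_eqF.
Qed.
End Gradient.

Section SwapDirection.
Variables (R : realType) (X T : finType) (x0 : X) (t t' : T).

Definition swap_dir (x : X) (s : T) : R := (x == x0)%:R * ((s == t)%:R - (s == t')%:R).

Lemma sum_indicator_mul (a : T) (h : T -> R) : \sum_s (s == a)%:R * h s = h a.
Proof.
rewrite (bigD1 a) //= eqxx mul1r big1 ?addr0 // => s s_neq.
by rewrite (negbTE s_neq) mul0r.
Qed.

Lemma sum_swap_dir (g : X -> T -> R) :
  \sum_x \sum_s swap_dir x s * g x s = g x0 t - g x0 t'.
Proof.
rewrite (bigD1 x0) //= [X in _ + X]big1 ?addr0 => [|x x_neq]; last first.
  by apply: big1 => s _; rewrite /swap_dir (negbTE x_neq) !mul0r.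
rewrite /swap_dir eqxx; under eq_bigr do rewrite mul1r mulrBl.
by rewrite sumrB !sum_indicator_mul.
Qed.

Lemma swap_dir_sum x : \sum_s swap_dir x s = 0.
Proof.
rewrite -mulr_sumr sumrB.
under eq_bigr do rewrite -[(_ == t)%:R]mulr1.
under [X in _ - X]eq_bigr do rewrite -[(_ == t')%:R]mulr1.
by rewrite !(sum_indicator_mul _ (fun=> 1)) subrr mulr0.
Qed.

Lemma kernel_line_swap_dir_gt0 (q : X -> T -> R) (z : R) :
  (forall x s, 0 < q x s) -> `|z| < Num.min (q x0 t) (q x0 t') ->
  forall x s, 0 < kernel_line q swap_dir z x s.
Proof.
move=> q_gt0; rewrite lt_min !ltr_norml => /andP[/andP[zt tz] /andP[zt' tz']] x s.
rewrite /kernel_line /swap_dir; move: (q_gt0 x s).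
have [->|x_neq] := eqVneq x x0; last by rewrite mul0r mulr0 addr0.
rewrite mul1r; case: eqP => [->|_]; case: eqP => [->|_] q_pos;
  rewrite ?subrr ?mulr0 ?addr0 ?subr0 ?sub0r ?mulr1 ?mulrN1 //; lra.
Qed.
End SwapDirection.
Arguments swap_dir {R X T}.

Section Stationarity.
Variables (R : realType) (X Y T1 T2 : finType) (pXY : X -> Y -> R).
Variables (beta lambda gamma : R) (q1 : X -> T1 -> R) (q2 : X -> T2 -> R).
Hypothesis pXY_ge0 : forall x y, 0 <= pXY x y.
Hypothesis pX_gt0 : forall x, 0 < pX pXY x.
Hypothesis beta_gt0 : 0 < beta.
Hypothesis q1_gt0 : forall x s, 0 < q1 x s.
Hypothesis q2_gt0 : forall x u, 0 < q2 x u.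
Hypothesis q1_sum : forall x, \sum_s q1 x s = 1.
Hypothesis q2_sum : forall x, \sum_u q2 x u = 1.
Hypothesis q_opt : forall (r1 : X -> T1 -> R) (r2 : X -> T2 -> R),
  cond_dist r1 -> cond_dist r2 ->
  IB_functional pXY beta lambda gamma q1 q2 <= IB_functional pXY beta lambda gamma r1 r2.

Lemma log_gibbs_ratio_const x0 t t' :
  log_gibbs_ratio pXY beta gamma q1 q2 x0 t = log_gibbs_ratio pXY beta gamma q1 q2 x0 t'.
Proof.
pose v : X -> T1 -> R := swap_dir x0 t t'; set m := Num.min (q1 x0 t) (q1 x0 t').
have m_gt0 : 0 < m by rewrite lt_min !q1_gt0.
have line_gt0 z : z \in `]-m, m[ -> forall x s, 0 < kernel_line q1 v z x s.
  by rewrite in_itv /= -ltr_norml; apply: kernel_line_swap_dir_gt0.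
have line0 : kernel_line q1 v 0 = q1.
  by apply/funext => x; apply/funext => s; rewrite /kernel_line mul0r addr0.
have m_in : (0 : R) \in `]-m, m[ by rewrite in_itv /= oppr_lt0 m_gt0.
set f := fun z => IB_functional pXY beta lambda gamma (kernel_line q1 v z) q2.
have f'0 : is_derive (0 : R) 1 f 0.
  apply: (derive1_at_min (a := -m) (b := m)) => //.
  - by rewrite ge0_cp ?ltW.
  - by move=> z /line_gt0 /(is_derive_IB_line beta lambda gamma pXY_ge0 pX_gt0 q2_gt0 x0) [].
  move=> z z_in; rewrite /f line0; apply: q_opt; last by split=> // x u; apply: ltW.
  split=> [x s|x]; first exact/ltW/line_gt0.
  by rewrite big_split /= -mulr_sumr swap_dir_sum mulr0 addr0.
have [_ f'0_val] := f'0.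
have [_] := is_derive_IB_line beta lambda gamma pXY_ge0 pX_gt0 q2_gt0 x0 (line_gt0 0 m_in).
rewrite -/f f'0_val line0 (IB_slopeE beta gamma pXY_ge0 pX_gt0 q1_gt0 q2_gt0 q2_sum x0).
rewrite sum_swap_dir => /esym/eqP; rewrite IB_grad_sub // !mulf_eq0.
by rewrite gt_eqF // (gt_eqF (pX_gt0 x0)) subr_eq0 => /eqP.
Qed.

Lemma optimal_q1_gibbs x s :
  q1 x s = pT1 pXY q1 s / Z1 pXY beta gamma q1 q2 x * expR (expo1 pXY beta gamma q1 q2 x s).
Proof.
have [c q1E] : exists c, forall s',
    q1 x s' = c * (pT1 pXY q1 s' * expR (expo1 pXY beta gamma q1 q2 x s')).
  exists (expR (log_gibbs_ratio pXY beta gamma q1 q2 x s)) => s'.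
  rewrite -(log_gibbs_ratio_const x s' s) /log_gibbs_ratio -[LHS]lnK ?posrE //.
  rewrite -[pT1 _ _ s' in RHS]lnK ?posrE ?(pT1_gt0 pX_gt0 x) // -!expRD.
  by rewrite expRK; congr expR; ring.
have cZ : c * Z1 pXY beta gamma q1 q2 x = 1.
  by rewrite -(q1_sum x) /Z1 mulr_sumr; apply: eq_bigr => s' _; rewrite q1E.
have Z_neq0 : Z1 pXY beta gamma q1 q2 x != 0.
  by apply/eqP => Z0; move/eqP: cZ; rewrite Z0 mulr0 eq_sym oner_eq0.
by rewrite q1E -[c](mulfK Z_neq0) cZ; ring.
Qed.
End Stationarity.

Section Symmetry.
Variables (R : realType) (X Y T1 T2 : finType) (pXY : X -> Y -> R).
Variables (r1 : X -> T1 -> R) (r2 : X -> T2 -> R).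

Lemma pT1T2_swap u s : pT1T2 pXY r2 r1 u s = pT1T2 pXY r1 r2 s u.
Proof. by apply: eq_bigr => x _; rewrite mulrAC. Qed.

Lemma pT12Y_swap u s y : pT12Y pXY r2 r1 (u, s) y = pT12Y pXY r1 r2 (s, u) y.
Proof. by apply: eq_bigr => x _; rewrite mulrAC. Qed.

Lemma IB_functional_swap (beta lambda gamma : R) :
  IB_functional pXY lambda beta gamma r2 r1 = IB_functional pXY beta lambda gamma r1 r2.
Proof.
have I12E : I_T1_T2 pXY r2 r1 = I_T1_T2 pXY r1 r2.
  rewrite /I_T1_T2 MI_tr; apply: eq_bigr => s _; apply: eq_bigr => u _.
  by rewrite pT1T2_swap mulrC.
have IY12E : I_Y_T12 pXY r2 r1 = I_Y_T12 pXY r1 r2.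
  rewrite /I_Y_T12 /MI !sum_pair exchange_big; apply: eq_bigr => s _.
  apply: eq_bigr => u _; apply: eq_bigr => y _.
  by rewrite pT12Y_swap /pT12 /= pT1T2_swap.
by rewrite /IB_functional I12E IY12E /I_T1_X /I_T2_X; ring.
Qed.

Lemma expo1_swap (lambda gamma : R) x u :
  expo1 pXY lambda gamma r2 r1 x u = expo2 pXY lambda gamma r1 r2 x u.
Proof.
rewrite /expo1 /expo2; congr (_ * KL _ _ - _ * _).
  by apply/funext => s; rewrite /pT2gT1 /pT1gT2 pT1T2_swap.
apply: eq_bigr => s _; congr (_ * KL _ _).
by apply/funext => y; rewrite /pYgT12 pT12Y_swap pT1T2_swap.
Qed.

Lemma Z1_swap (lambda gamma : R) x :
  Z1 pXY lambda gamma r2 r1 x = Z2 pXY lambda gamma r1 r2 x.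
Proof. by apply: eq_bigr => u _; rewrite expo1_swap. Qed.
End Symmetry.

Theorem theorem1 (R : realType) (X Y T1 T2 : finType) (pXY : X -> Y -> R)
  (beta lambda gamma : R)
  (q1 : X -> T1 -> R) (q2 : X -> T2 -> R) :
  joint_dist pXY ->
  (forall x, 0 < pX pXY x) ->
  0 < beta -> 0 < lambda -> 0 <= gamma ->
  cond_dist q1 -> cond_dist q2 ->
  (forall x t1, 0 < q1 x t1) -> (forall x t2, 0 < q2 x t2) ->
  (forall (r1 : X -> T1 -> R) (r2 : X -> T2 -> R),
     cond_dist r1 -> cond_dist r2 ->
     IB_functional pXY beta lambda gamma q1 q2 <=
     IB_functional pXY beta lambda gamma r1 r2) ->
  (forall x t1, q1 x t1 =
     pT1 pXY q1 t1 / Z1 pXY beta gamma q1 q2 x * expR (expo1 pXY beta gamma q1 q2 x t1)) /\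
  (forall x t2, q2 x t2 =
     pT2 pXY q2 t2 / Z2 pXY lambda gamma q1 q2 x * expR (expo2 pXY lambda gamma q1 q2 x t2)).
Proof.
move=> [pXY_ge0 _] pX_gt0 beta_gt0 lambda_gt0 _ [_ q1_sum] [_ q2_sum] q1_gt0 q2_gt0 q_opt.
split; first exact: (optimal_q1_gibbs pXY_ge0 pX_gt0 beta_gt0 q1_gt0 q2_gt0 q1_sum q2_sum q_opt).
(* [pT2 pXY q2] is [pT1 pXY q2], so the T1-equation of the exchanged problem is
   the T2-equation. *)
move=> x u; rewrite -expo1_swap -Z1_swap.
have q_opt' : forall (r2 : X -> T2 -> R) (r1 : X -> T1 -> R), cond_dist r2 -> cond_dist r1 ->
    IB_functional pXY lambda beta gamma q2 q1 <= IB_functional pXY lambda beta gamma r2 r1.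
  by move=> r2 r1 r2_cd r1_cd; rewrite !(IB_functional_swap pXY _ _ beta lambda); apply: q_opt.
exact: (optimal_q1_gibbs pXY_ge0 pX_gt0 lambda_gt0 q2_gt0 q1_gt0 q2_sum q1_sum q_opt' x u).
Qed.
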